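(* For all $t>0$, the limit $$P'_{*,-}(t):=\lim_{s\uparrow t}\frac{P_*(t)-P_*(s)}{t-s}$$ exists and belongs to $[-\tau_{\max},-\tau_{\min}]$.
   Context: Setting: $Q=\mathbb{T}^2\setminus\bigcup_i\mathcal{O}_i$ is a Sinai billiard table (finitely many pairwise disjoint convex closed domains $\mathcal{O}_i$ in the two-torus with $C^3$ boundaries of strictly positive curvature) with finite horizon (no trajectory makes only tangential collisions). $T:M\to M$, $M=\partial Q\times[-\pi/2,\pi/2]$ (coordinates $(r,\varphi)$), is the billiard map, $\tau(x)$ the free flight time from $x$ to $T(x)$, $\tau_{\min}=\inf\tau>0$, $\tau_{\max}=\sup\tau<\infty$, $\Sigma_n\tau=\sum_{k=0}^{n-1}\tau\circ T^k$. $\mathcal{S}_0=\{\varphi=\pm\pi/2\}$ and for $n\ge1$, $\mathcal{S}_n=\bigcup_{i=-n}^{0}T^i\mathcal{S}_0$; $\mathcal{M}_0^n$ is the set of maximal connected components of $M\setminus\mathcal{S}_n$. For $t\ge0$, $Q_n(t)=\sum_{A\in\mathcal{M}_0^n}\sup_Ae^{-t\Sigma_n\tau}$ and $P_*(t)=\lim_{n\to\infty}\frac1n\log Q_n(t)$ (the limit exists and $t\mapsto P_*(t)$ is convex). *)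

From mathcomp Require Import all_boot all_order all_algebra.
From mathcomp Require Import all_classical all_reals all_analysis.
Import Order.TTheory GRing.Theory Num.Theory.
Import numFieldNormedType.Exports.
Local Open Scope classical_set_scope.
Local Open Scope ring_scope.

Section BilliardPressure.
Context {R : realType} {M : topologicalType}
  (T : M -> M) (tau : M -> R) (S0 : set M).

Definition birkhoff_tau (n : nat) (x : M) : R :=
  \sum_(k < n) tau (iter k T x).

(* S_n = ⋃_{i=-n}^{0} T^i S_0 = ⋃_{k=0}^{n} (T^k)^{-1} S_0 *)
Definition sing_set (n : nat) : set M :=
  [set x | exists k : nat, (k <= n)%N /\ S0 (iter k T x)].

Definition comps (n : nat) : set (set M) :=
  [set connected_component (~` sing_set n) x | x in ~` sing_set n].

Definition Qn (n : nat) (t : R) : R :=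
  \sum_(A \in comps n) sup [set expR (- (t * birkhoff_tau n x)) | x in A].

Definition pressure_seq (t : R) (n : nat) : R := ln (Qn n t) / n%:R.

Definition Pstar (t : R) : R := limn (pressure_seq t).

Definition tau_min : R := inf (range tau).
Definition tau_max : R := sup (range tau).

End BilliardPressure.

From mathcomp Require Import all_boot all_order all_algebra.
From mathcomp Require Import all_classical all_reals all_analysis.
From mathcomp Require Import ring lra.
Import Order.TTheory GRing.Theory Num.Theory.
Import numFieldNormedType.Exports.
Local Open Scope classical_set_scope.
Local Open Scope ring_scope.

(* Since
   n τ_min <= Σ_n τ <= n τ_max, shifting t to s <= t multiplies every summand
   by a factor between exp(-(t-s) n τ_max) and exp(-(t-s) n τ_min), and
   convexity of exp makes log Q_n convex in t.  Both facts survive division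
   by n and the limit n -> oo, so P_* is convex on [0, +oo) with increments
   -(t-s) τ_max <= P_*(t) - P_*(s) <= -(t-s) τ_min.  For a convex function the
   secant slope (P_*(t) - P_*(s)) / (t - s) is nondecreasing in s < t; being
   bounded, it converges as s increases to t, and the limit keeps the bounds. *)

Lemma expR_convex (R : realType) (l a b : R) : 0 <= l -> l <= 1 ->
  expR (l * a + (1 - l) * b) <= l * expR a + (1 - l) * expR b.
Proof.
by move=> l0 l1; have := @convex_expR R (Itv01 l0 l1) a b; rewrite !convRE.
Qed.

Lemma ler_fsum (R : numDomainType) (I : choiceType) (P : set I) (F G : I -> R) :
  finite_set P -> (forall i, P i -> F i <= G i) ->
  \sum_(i \in P) F i <= \sum_(i \in P) G i.
Proof.
move=> fP FG; rewrite !fsbig_finite// big_seq [leRHS]big_seq.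
by apply: ler_sum => i; rewrite in_fset_set// inE => /FG.
Qed.

Lemma limn_increment (R : realType) (u v : R^nat) (lo hi : R) :
  cvgn u -> cvgn v -> (\forall n \near \oo, lo <= u n - v n <= hi) ->
  lo <= limn u - limn v <= hi.
Proof.
move=> cu cv near_uv; have cuv : cvgn (u - v) by exact: is_cvgB.
rewrite -limB//; apply/andP; split.
  by apply: limr_ge => //; apply: filterS near_uv => n /andP[].
by apply: limr_le => //; apply: filterS near_uv => n /andP[].
Qed.

Lemma limn_le_conv (R : realType) (u v w : R^nat) (l : R) :
  cvgn u -> cvgn v -> cvgn w -> (forall n, u n <= l * v n + (1 - l) * w n) ->
  limn u <= l * limn v + (1 - l) * limn w.
Proof.
move=> cu cv cw le_uvw.
apply: (ler_cvg_to cu (g := fun n => l * v n + (1 - l) * w n)); last exact: nearW.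
by apply: cvgD; exact: cvgMl_tmp.
Qed.

Section LeftSlope.
Variables (R : realType) (f : R -> R) (a t : R).
Hypothesis f_convex : forall l x y : R, 0 <= l -> l <= 1 -> a <= x -> a <= y ->
  f (l * x + (1 - l) * y) <= l * f x + (1 - l) * f y.

Definition slope_to (s : R) : R := (f t - f s) / (t - s).

Lemma slope_to_nondecreasing (s1 s2 : R) : a <= s1 -> s1 <= s2 -> s2 < t ->
  slope_to s1 <= slope_to s2.
Proof.
move=> as1 s12 s2t.
have d1 : 0 < t - s1 by rewrite subr_gt0 (le_lt_trans s12).
have d2 : 0 < t - s2 by rewrite subr_gt0.
set l := (t - s2) / (t - s1).
have l0 : 0 <= l by rewrite divr_ge0// ltW.
have l1 : l <= 1 by rewrite ler_pdivrMr// mul1r lerD2l lerN2.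
have a_le_t : a <= t by rewrite (le_trans as1)// ltW// (le_lt_trans s12).
have s2E : l * s1 + (1 - l) * t = s2 by rewrite /l; field; rewrite gt_eqF.
have := @f_convex l s1 t l0 l1 as1 a_le_t; rewrite s2E => fs2.
rewrite /slope_to ler_pdivrMr// mulrAC ler_pdivlMr//.
have -> : t - s2 = l * (t - s1) by rewrite /l; field; rewrite gt_eqF.
rewrite mulrA ler_pM2r//.
have -> : (f t - f s1) * l = f t - (l * f s1 + (1 - l) * f t) by ring.
by rewrite lerD2l lerN2.
Qed.

Lemma left_slope_cvg (lo hi : R) : a < t ->
  (forall s, a <= s -> s < t -> lo * (t - s) <= f t - f s <= hi * (t - s)) ->
  exists L, slope_to @ t^'- --> L /\ lo <= L <= hi.
Proof.
move=> a_lt_t incr.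
have slope_bounds s : a <= s -> s < t -> lo <= slope_to s <= hi.
  move=> a_le_s st; have /andP[lo_s s_hi] := incr s a_le_s st.
  by rewrite /slope_to ler_pdivlMr ?ler_pdivrMr ?subr_gt0// lo_s s_hi.
have slope_cvg : cvg (slope_to @ t^'-).
  apply: nondecreasing_at_left_is_cvgr.
  - near=> x => y z; rewrite !in_itv /= => /andP[xy _] /andP[_ zt] yz.
    apply: slope_to_nondecreasing => //; apply: ltW; apply: lt_trans xy.
    by near: x; exact: nbhs_left_gt.
  - near=> x; exists hi => _ [y /= + <-]; rewrite in_itv /= => /andP[xy yt].
    have ay : a <= y.
      by apply: ltW; apply: lt_trans xy; near: x; exact: nbhs_left_gt.
    by have /andP[] := slope_bounds y ay yt.
exists (lim (slope_to @ t^'-)); split => //.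
have near_bounds : \forall s \near t^'-, lo <= slope_to s <= hi.
  near=> s; apply: slope_bounds; last by near: s; exact: nbhs_left_lt.
  by apply: ltW; near: s; exact: nbhs_left_gt.
apply/andP; split.
  by apply: limr_ge => //; apply: filterS near_bounds => s /andP[].
by apply: limr_le => //; apply: filterS near_bounds => s /andP[].
Unshelve. all: by end_near.
Qed.

End LeftSlope.

Section SupExpSum.
Variables (R : realType) (X : Type) (g : X -> R) (C : set (set X)).
Hypothesis g_ge0 : forall x, 0 <= g x.
Hypothesis C_finite : finite_set C.
Hypothesis C_member_neq0 : forall A, C A -> A !=set0.
Hypothesis C_neq0 : C !=set0.

Definition sup_exp (A : set X) (t : R) : R :=
  sup [set expR (- (t * g x)) | x in A].

Definition sup_exp_sum (t : R) : R := \sum_(A \in C) sup_exp A t.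

Lemma sup_exp_ub A t x : 0 <= t -> A x -> expR (- (t * g x)) <= sup_exp A t.
Proof.
move=> t0 Ax; apply: ub_le_sup; last by exists x.
by exists 1 => _ [y _ <-]; rewrite expR_le1 oppr_le0 mulr_ge0.
Qed.

Lemma sup_exp_le A t c : A !=set0 ->
  (forall x, A x -> expR (- (t * g x)) <= c) -> sup_exp A t <= c.
Proof.
move=> [x Ax] le_c; apply: ge_sup; first by exists (expR (- (t * g x))), x.
by move=> _ [y Ay <-]; apply: le_c.
Qed.

Lemma sup_exp_gt0 A t : 0 <= t -> A !=set0 -> 0 < sup_exp A t.
Proof.
by move=> t0 [x Ax]; exact: lt_le_trans (expR_gt0 _) (sup_exp_ub _ _ _ t0 Ax).
Qed.

Lemma sup_exp_sum_gt0 t : 0 <= t -> 0 < sup_exp_sum t.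
Proof.
move=> t0; case: C_neq0 => A CA; rewrite /sup_exp_sum (fsbigD1 A)//.
apply: ltr_pwDl; first exact/sup_exp_gt0/C_member_neq0.
by apply: fsumr_ge0 => B [CB _]; exact/ltW/sup_exp_gt0/C_member_neq0.
Qed.

Lemma sup_exp_sum_le_shift (s t m : R) :
  0 <= s -> s <= t -> (forall x, m <= g x) ->
  sup_exp_sum t <= expR (- ((t - s) * m)) * sup_exp_sum s.
Proof.
move=> s0 st m_le_g; rewrite /sup_exp_sum mulr_fsumr.
apply: ler_fsum => // A CA.
apply: sup_exp_le => [|x Ax]; first exact: C_member_neq0.
have -> : - (t * g x) = - ((t - s) * g x) + - (s * g x) by ring.
rewrite expRD ler_pM ?expR_ge0 ?sup_exp_ub//.
by rewrite ler_expR lerN2 ler_wpM2l// subr_ge0.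
Qed.

Lemma sup_exp_sum_ge_shift (s t M : R) :
  0 <= s -> s <= t -> (forall x, g x <= M) ->
  sup_exp_sum s <= expR ((t - s) * M) * sup_exp_sum t.
Proof.
move=> s0 st g_le_M; rewrite /sup_exp_sum mulr_fsumr.
apply: ler_fsum => // A CA.
apply: sup_exp_le => [|x Ax]; first exact: C_member_neq0.
have -> : - (s * g x) = (t - s) * g x + - (t * g x) by ring.
rewrite expRD ler_pM ?expR_ge0 ?sup_exp_ub ?(le_trans s0)//.
by rewrite ler_expR ler_wpM2l// subr_ge0.
Qed.

Lemma ln_sup_exp_sum_increment (s t m M : R) : 0 <= s -> s <= t ->
  (forall x, m <= g x <= M) ->
  - M * (t - s) <= ln (sup_exp_sum t) - ln (sup_exp_sum s) <= - m * (t - s).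
Proof.
move=> s0 st g_bounds.
have Qs := sup_exp_sum_gt0 _ s0; have Qt := sup_exp_sum_gt0 _ (le_trans s0 st).
have le := sup_exp_sum_le_shift _ _ _ s0 st (fun x => proj1 (andP (g_bounds x))).
have ge := sup_exp_sum_ge_shift _ _ _ s0 st (fun x => proj2 (andP (g_bounds x))).
rewrite -ler_ln ?posrE ?mulr_gt0 ?expR_gt0// lnM ?posrE ?expR_gt0// expRK in le.
rewrite -ler_ln ?posrE ?mulr_gt0 ?expR_gt0// lnM ?posrE ?expR_gt0// expRK in ge.
by apply/andP; split; lra.
Qed.

(* With Q := sup_exp_sum and K := Q(a)^l Q(b)^(1-l), convexity of exp bounds
   each summand of Q(l a + (1-l) b) / K by
   l sup_exp A a / Q(a) + (1-l) sup_exp A b / Q(b), and these sum to 1. *)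
Lemma ln_sup_exp_sum_convex (l a b : R) :
  0 <= l -> l <= 1 -> 0 <= a -> 0 <= b ->
  ln (sup_exp_sum (l * a + (1 - l) * b)) <=
  l * ln (sup_exp_sum a) + (1 - l) * ln (sup_exp_sum b).
Proof.
move=> l0 l1 a0 b0.
have Qa := sup_exp_sum_gt0 _ a0; have Qb := sup_exp_sum_gt0 _ b0.
set K := expR (l * ln (sup_exp_sum a) + (1 - l) * ln (sup_exp_sum b)).
have K0 : 0 < K by exact: expR_gt0.
have ab0 : 0 <= l * a + (1 - l) * b by rewrite addr_ge0 ?mulr_ge0 ?subr_ge0.
rewrite -ler_expR lnK ?posrE ?sup_exp_sum_gt0// -/K.
suff : sup_exp_sum (l * a + (1 - l) * b) / K <=
    l * (sup_exp_sum a / sup_exp_sum a) +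
    (1 - l) * (sup_exp_sum b / sup_exp_sum b).
  by rewrite !divff ?gt_eqF// !mulr1 ler_pdivrMr// subrKC mul1r.
rewrite /sup_exp_sum mulr_fsuml !mulr_fsuml !mulr_fsumr -fsbig_split//.
apply: ler_fsum => // A CA; rewrite ler_pdivrMr//.
apply: sup_exp_le => [|x Ax]; first exact: C_member_neq0.
rewrite -ler_pdivrMr//.
have -> : expR (- ((l * a + (1 - l) * b) * g x)) / K =
    expR (l * (- (a * g x) - ln (sup_exp_sum a)) +
          (1 - l) * (- (b * g x) - ln (sup_exp_sum b))).
  by rewrite /K -expRN -expRD; congr expR; ring.
apply: le_trans (expR_convex _ _ _ _ l0 l1) _.
rewrite !expRD !expRN !lnK ?posrE// -!expRN.
by rewrite lerD// ler_wpM2l ?subr_ge0// ler_wpM2r ?invr_ge0 ?(ltW Qa) ?(ltW Qb)//;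
  exact: sup_exp_ub.
Qed.

End SupExpSum.

Arguments ln_sup_exp_sum_increment {R X g C} _ _ _ _ {s t m M}.
Arguments ln_sup_exp_sum_convex {R X g C} _ _ _ _ {l a b}.

Section BilliardPressure.
Variables (R : realType) (M : topologicalType)
  (T : M -> M) (tau : M -> R) (S0 : set M).
Hypothesis comps_finite : forall n : nat, finite_set (comps T S0 n).
Hypothesis sing_setC_neq0 : forall n : nat, ~` sing_set T S0 n !=set0.
Hypothesis tau_min_gt0 : 0 < tau_min tau.
Hypothesis tau_ubound : has_ubound (range tau).
Hypothesis pressure_seq_cvg :
  forall t : R, 0 <= t -> cvgn (pressure_seq T tau S0 t).

Local Notation P := (Pstar T tau S0).

Lemma tau_min_le x : tau_min tau <= tau x.
Proof.
have : has_lbound (range tau).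
  apply: contrapT => no_lb; move: tau_min_gt0.
  by rewrite /tau_min inf_out ?ltxx//; case.
by move/ge_inf; apply; exists x.
Qed.

Lemma tau_le_max x : tau x <= tau_max tau.
Proof. by apply: ub_le_sup tau_ubound _ _; exists x. Qed.

Lemma birkhoff_tau_bounds n x :
  n%:R * tau_min tau <= birkhoff_tau T tau n x <= n%:R * tau_max tau.
Proof.
have const_sum c : n%:R * c = \sum_(k < n) c.
  by rewrite sumr_const card_ord mulr_natl.
rewrite /birkhoff_tau !const_sum.
by apply/andP; split; apply: ler_sum => k _; rewrite ?tau_min_le ?tau_le_max.
Qed.

Lemma birkhoff_tau_ge0 n x : 0 <= birkhoff_tau T tau n x.
Proof.
have /andP[+ _] := birkhoff_tau_bounds n x; apply: le_trans.
by rewrite mulr_ge0// ltW.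
Qed.

Lemma comps_member_neq0 n A : comps T S0 n A -> A !=set0.
Proof. by move=> [x nx <-]; exists x; exact: connected_component_refl. Qed.

Lemma comps_neq0 n : comps T S0 n !=set0.
Proof.
have [x nx] := sing_setC_neq0 n.
by exists (connected_component (~` sing_set T S0 n) x), x.
Qed.

Lemma pressure_seq_increment n (s t : R) : (0 < n)%N -> 0 <= s -> s <= t ->
  - tau_max tau * (t - s) <= pressure_seq T tau S0 t n - pressure_seq T tau S0 s n
    <= - tau_min tau * (t - s).
Proof.
move=> n_gt0 s0 st.
have := ln_sup_exp_sum_increment (@birkhoff_tau_ge0 n) (comps_finite n)
  (@comps_member_neq0 n) (comps_neq0 n) s0 st (birkhoff_tau_bounds n).
rewrite -[sup_exp_sum _ _ _ _ t]/(Qn T tau S0 n t).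
rewrite -[sup_exp_sum _ _ _ _ s]/(Qn T tau S0 n s).
rewrite /pressure_seq -mulrBl.
have n0 : 0 < n%:R :> R by rewrite ltr0n.
move=> /andP[lo hi]; rewrite ler_pdivlMr ?ler_pdivrMr//.
by apply/andP; split; lra.
Qed.

Lemma pressure_seq_convex n (l a b : R) :
  0 <= l -> l <= 1 -> 0 <= a -> 0 <= b ->
  pressure_seq T tau S0 (l * a + (1 - l) * b) n <=
  l * pressure_seq T tau S0 a n + (1 - l) * pressure_seq T tau S0 b n.
Proof.
move=> l0 l1 a0 b0.
have := ln_sup_exp_sum_convex (@birkhoff_tau_ge0 n) (comps_finite n)
  (@comps_member_neq0 n) (comps_neq0 n) l0 l1 a0 b0.
rewrite /pressure_seq !mulrA -mulrDl => le_ln.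
by rewrite ler_wpM2r ?invr_ge0.
Qed.

Lemma Pstar_increment (s t : R) : 0 <= s -> s <= t ->
  - tau_max tau * (t - s) <= P t - P s <= - tau_min tau * (t - s).
Proof.
move=> s0 st; apply: limn_increment.
- exact: pressure_seq_cvg (le_trans s0 st).
- exact: pressure_seq_cvg.
- by exists 1%N => // n /= n_gt0; exact: pressure_seq_increment.
Qed.

Lemma Pstar_convex (l a b : R) : 0 <= l -> l <= 1 -> 0 <= a -> 0 <= b ->
  P (l * a + (1 - l) * b) <= l * P a + (1 - l) * P b.
Proof.
move=> l0 l1 a0 b0.
have ab0 : 0 <= l * a + (1 - l) * b by rewrite addr_ge0 ?mulr_ge0 ?subr_ge0.
apply: limn_le_conv; [exact: pressure_seq_cvg ..|] => n.
exact: pressure_seq_convex.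
Qed.

End BilliardPressure.

Theorem lemma3p4 (R : realType) (M : topologicalType)
  (T : M -> M) (tau : M -> R) (S0 : set M)
  (hfin : forall n : nat, finite_set (comps T S0 n))
  (hne : forall n : nat, ~` sing_set T S0 n !=set0)
  (htaumin : 0 < tau_min tau)
  (htaumax : has_ubound (range tau))
  (hlim : forall t : R, 0 <= t -> cvgn (pressure_seq T tau S0 t)) :
  forall t : R, 0 < t ->
    exists L : R,
      ((fun s : R => (Pstar T tau S0 t - Pstar T tau S0 s) / (t - s))
         @ at_left t --> L)
      /\ - tau_max tau <= L <= - tau_min tau.
Proof.
move=> t t_gt0; apply: (@left_slope_cvg _ _ 0) => //.
  by move=> l x y l0 l1 x0 y0; exact: Pstar_convex.
by move=> s s0 st; apply: Pstar_increment => //; exact: ltW.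
Qed.
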